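(* Let $\alpha\in(0,1]$, $\gamma\in(\tfrac12,1]$, $c>0$, and let $(r_n)_{n\ge0}$ satisfy $0\le r_n<1$ and $\lim_{n\to\infty}n^\gamma r_n=c$. Define $l_n=\prod_{k=0}^{n-1}\frac{1}{1-\alpha r_k}$ and $k_n(t)=\lfloor n+n^\gamma t\rfloor$ for $t\ge0$. Then, uniformly over compact subsets of $[0,+\infty)$, \[\lim_{n\to\infty}\frac{l_{k_n(t)}}{l_n}=\begin{cases}e^{c\alpha t}&\text{if }\tfrac12<\gamma<1,\\(1+t)^{c\alpha}&\text{if }\gamma=1\text{ and }2c\alpha>1.\end{cases}\] *)

From Stdlib Require Import Reals Lra ZArith.
Open Scope R_scope.

Fixpoint lprod (alpha : R) (r : nat -> R) (n : nat) : R :=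
  match n with
  | O => 1
  | S m => lprod alpha r m * / (1 - alpha * r m)
  end.

(* k_n(t) = floor(n + n^gamma t)  (Int_part is the floor; argument >= 0 for t >= 0) *)
Definition kidx (gamma : R) (n : nat) (t : R) : nat :=
  Z.to_nat (Int_part (INR n + Rpower (INR n) gamma * t)).

Definition unif_cv_on (F : nat -> R -> R) (f : R -> R) (K : R -> Prop) : Prop :=
  forall eps : R, 0 < eps ->
    exists N : nat, forall n : nat, (N <= n)%nat ->
      forall t : R, K t -> Rabs (F n t - f t) < eps.

(* Since l_{n+m} / l_n = exp (sum_{n <= j < n+m} -ln (1 - alpha r_j)) and
   -ln (1 - x) = x + O(x^2), the summands are c alpha j^(-gamma) (1 + o(1)).
   Hence log (l_{k_n(t)} / l_n) is c alpha sum_{n <= j < k_n(t)} j^(-gamma) up to a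
   relative error o(1).  That sum has about n^gamma t terms: for gamma < 1 they are all
   n^(-gamma) (1 + o(1)) and the sum tends to t, while for gamma = 1 it is a harmonic
   sum tending to ln (1 + t).  All estimates are uniform for t in a bounded set. *)

From Stdlib Require Import Reals Lra Lia ZArith.
Open Scope R_scope.

Lemma exp_le x y : x <= y -> exp x <= exp y.
Proof. intros [H| ->]; [left; now apply exp_increasing | lra]. Qed.

Lemma ln_le x y : 0 < x -> x <= y -> ln x <= ln y.
Proof. intros Hx [H| ->]; [left; now apply ln_increasing | lra]. Qed.

Lemma ln_ge_0 x : 1 <= x -> 0 <= ln x.
Proof. intros H. rewrite <- ln_1. apply ln_le; lra. Qed.

Lemma ln_le_sub_1 x : 0 < x -> ln x <= x - 1.
Proof. intros Hx. pose proof (exp_ineq1_le (ln x)). rewrite exp_ln in H; lra. Qed.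

Lemma ln_sub_le a b : 0 < a -> 0 < b -> ln a - ln b <= a / b - 1.
Proof.
  intros Ha Hb. assert (Hab : 0 < a / b) by (apply Rdiv_lt_0_compat; lra).
  replace a with (b * (a / b)) at 1 by (field; lra).
  rewrite ln_mult by lra. pose proof (ln_le_sub_1 _ Hab). lra.
Qed.

Lemma Rabs_exp_sub_1_le d : Rabs d <= 1 -> Rabs (exp d - 1) <= 3 * Rabs d.
Proof.
  intros Hd. pose proof (exp_ineq1_le d) as Hlo.
  destruct (Rle_lt_dec 0 d) as [Hd0|Hd0].
  - rewrite Rabs_pos_eq in Hd by lra. rewrite (Rabs_pos_eq d), Rabs_pos_eq by lra.
    assert (exp d <= 3) by (apply Rle_trans with (exp 1); [apply exp_le; lra | apply exp_le_3]).
    assert (exp d - 1 <= d * exp d).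
    { pose proof (exp_ineq1_le (- d)) as Hneg. rewrite exp_Ropp in Hneg.
      pose proof (exp_pos d). apply Rmult_le_compat_l with (r := exp d) in Hneg; [|lra].
      rewrite Rinv_r in Hneg by lra. lra. }
    nra.
  - assert (exp d < 1) by (rewrite <- exp_0; now apply exp_increasing).
    rewrite Rabs_left in * by lra. rewrite Rabs_left1 by lra. lra.
Qed.

Lemma neg_ln_1_sub_bounds x : 0 <= x <= 1/2 -> x <= - ln (1 - x) <= x + 2 * x * x.
Proof.
  intros Hx. rewrite <- ln_Rinv by lra. split.
  - pose proof (ln_le_sub_1 (1 - x) ltac:(lra)). rewrite ln_Rinv; lra.
  - eapply Rle_trans; [apply ln_le_sub_1, Rinv_0_lt_compat; lra |].
    replace (/ (1 - x) - 1) with (x / (1 - x)) by (field; lra).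
    apply Rmult_le_reg_r with (1 - x); [lra |].
    unfold Rdiv. rewrite Rmult_assoc, Rinv_l, Rmult_1_r by lra. nra.
Qed.

Lemma Rpower_pos x y : 0 < Rpower x y.
Proof. apply exp_pos. Qed.

Lemma Rpower_opp_mul x y : Rpower x (- y) * Rpower x y = 1.
Proof. unfold Rpower. rewrite <- exp_plus, <- exp_0. f_equal; ring. Qed.

Lemma Rpower_opp_1 x : 0 < x -> Rpower x (-1) = / x.
Proof. intros Hx. rewrite <- (Rpower_1 x Hx) at 2. apply Rpower_Ropp. Qed.

Lemma Rpower_le_base_nonpos a b y : 0 < a -> a <= b -> y <= 0 -> Rpower b y <= Rpower a y.
Proof.
  intros Ha Hab Hy. apply exp_le. pose proof (ln_le a b Ha Hab). nra.
Qed.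

Lemma Rpower_1_add_opp_bounds x g :
  0 <= x -> 0 < g -> 1 - g * x <= Rpower (1 + x) (- g) <= 1.
Proof.
  intros Hx Hg. unfold Rpower.
  assert (0 <= ln (1 + x)) by (apply ln_ge_0; lra).
  assert (ln (1 + x) <= x) by (pose proof (ln_le_sub_1 (1 + x) ltac:(lra)); lra).
  assert (g * ln (1 + x) <= g * x) by (apply Rmult_le_compat_l; lra).
  pose proof (exp_ineq1_le (- g * ln (1 + x))).
  split; [lra |]. rewrite <- exp_0 at 2. apply exp_le. nra.
Qed.

Lemma Rpower_opp_eventually_le beta eta : 0 < beta -> 0 < eta ->
  exists N, (1 <= N)%nat /\ forall j, (N <= j)%nat -> Rpower (INR j) (- beta) <= eta.
Proof.
  intros Hb He. destruct (INR_archimed 1 (exp (- ln eta / beta))) as [n Hn]; [lra |].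
  exists (S n). split; [lia |]. intros j Hj.
  apply le_INR in Hj. rewrite S_INR in Hj.
  assert (Hl : - ln eta / beta <= ln (INR j)).
  { rewrite <- (ln_exp (- ln eta / beta)). apply ln_le; [apply exp_pos | lra]. }
  rewrite <- (exp_ln eta He). apply exp_le.
  apply Rmult_le_compat_l with (r := beta) in Hl; [|lra].
  replace (beta * (- ln eta / beta)) with (- ln eta) in Hl by (field; lra). lra.
Qed.

Fixpoint sum_from (f : nat -> R) (n m : nat) : R :=
  match m with
  | O => 0
  | S m' => sum_from f n m' + f (n + m')%nat
  end.

Lemma sum_from_ext f g n m :
  (forall i, (i < m)%nat -> f (n + i)%nat = g (n + i)%nat) -> sum_from f n m = sum_from g n m.
Proof.
  induction m as [|m IH]; intros H; simpl; [reflexivity |].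
  rewrite IH, H; [reflexivity | lia | intros i Hi; apply H; lia].
Qed.

Lemma sum_from_bounds f n m lo hi :
  (forall i, (i < m)%nat -> lo <= f (n + i)%nat <= hi) ->
  INR m * lo <= sum_from f n m <= INR m * hi.
Proof.
  induction m as [|m IH]; intros H; simpl sum_from; [simpl; lra |].
  rewrite S_INR. pose proof (IH (fun i Hi => H i ltac:(lia))). pose proof (H m ltac:(lia)). lra.
Qed.

Lemma sum_from_approx f g n m C e :
  (forall i, (i < m)%nat -> Rabs (f (n + i)%nat - C * g (n + i)%nat) <= e * g (n + i)%nat) ->
  Rabs (sum_from f n m - C * sum_from g n m) <= e * sum_from g n m.
Proof.
  induction m as [|m IH]; intros H; simpl sum_from.
  - rewrite Rmult_0_r, Rminus_0_r, Rabs_R0; lra.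
  - pose proof (IH (fun i Hi => H i ltac:(lia))). pose proof (H m ltac:(lia)).
    replace (sum_from f n m + f (n + m)%nat - C * (sum_from g n m + g (n + m)%nat))
      with ((sum_from f n m - C * sum_from g n m) + (f (n + m)%nat - C * g (n + m)%nat)) by ring.
    eapply Rle_trans; [apply Rabs_triang | lra].
Qed.

Lemma sum_from_telescope_ge f G n m :
  (forall i, (i < m)%nat -> G (S (n + i)) - G (n + i)%nat <= f (n + i)%nat) ->
  G (n + m)%nat - G n <= sum_from f n m.
Proof.
  induction m as [|m IH]; intros H; simpl sum_from; [rewrite Nat.add_0_r; lra |].
  pose proof (IH (fun i Hi => H i ltac:(lia))). pose proof (H m ltac:(lia)).
  rewrite Nat.add_succ_r. lra.
Qed.

Lemma sum_from_telescope_le f G n m :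
  (forall i, (i < m)%nat -> f (n + i)%nat <= G (S (n + i)) - G (n + i)%nat) ->
  sum_from f n m <= G (n + m)%nat - G n.
Proof.
  induction m as [|m IH]; intros H; simpl sum_from; [rewrite Nat.add_0_r; lra |].
  pose proof (IH (fun i Hi => H i ltac:(lia))). pose proof (H m ltac:(lia)).
  rewrite Nat.add_succ_r. lra.
Qed.

Lemma sum_from_inv_ge_ln n m : (1 <= n)%nat ->
  ln (INR (n + m)) - ln (INR n) <= sum_from (fun j => / INR j) n m.
Proof.
  intros Hn. apply sum_from_telescope_ge with (G := fun j => ln (INR j)). intros i _.
  assert (0 < INR (n + i)) by (apply lt_0_INR; lia).
  rewrite S_INR. eapply Rle_trans; [apply ln_sub_le; lra | right; field; lra].
Qed.

Lemma sum_from_inv_le_ln n m : (2 <= n)%nat ->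
  sum_from (fun j => / INR j) n m <= ln (INR (n + m) - 1) - ln (INR n - 1).
Proof.
  intros Hn. apply sum_from_telescope_le with (G := fun j => ln (INR j - 1)). intros i _.
  assert (2 <= INR (n + i)) by (replace 2 with (INR 2) by (simpl; ring); apply le_INR; lia).
  pose proof (ln_sub_le (INR (n + i) - 1) (INR (n + i)) ltac:(lra) ltac:(lra)).
  rewrite S_INR. replace (INR (n + i) + 1 - 1) with (INR (n + i)) by ring.
  replace ((INR (n + i) - 1) / INR (n + i) - 1) with (- / INR (n + i)) in * by (field; lra).
  lra.
Qed.

Definition equiv_scal (a : nat -> R) (C : R) (w : nat -> R) : Prop :=
  forall eps, 0 < eps ->
    exists N, forall j, (N <= j)%nat -> Rabs (a j - C * w j) <= eps * w j.

Lemma unif_cv_on_ext F G f g K :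
  (forall n t, K t -> F n t = G n t) -> (forall t, K t -> f t = g t) ->
  unif_cv_on G g K -> unif_cv_on F f K.
Proof.
  intros HF Hf HG eps He. destruct (HG eps He) as [N HN]. exists N.
  intros n Hn t Ht. rewrite HF, Hf by assumption. now apply HN.
Qed.

Lemma unif_cv_on_exp F f K H :
  (forall t, K t -> Rabs (f t) <= H) ->
  unif_cv_on F f K -> unif_cv_on (fun n t => exp (F n t)) (fun t => exp (f t)) K.
Proof.
  intros Hf HF eps He.
  assert (HB : 0 < exp H) by apply exp_pos.
  set (d := Rmin 1 (eps / (4 * exp H))).
  assert (Hd : 0 < d) by (apply Rmin_pos; [lra | apply Rdiv_lt_0_compat; lra]).
  destruct (HF d Hd) as [N HN]. exists N. intros n Hn t Ht.
  specialize (HN n Hn t Ht). pose proof (Hf t Ht) as Hft.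
  assert (Hd1 : d <= 1) by apply Rmin_l.
  assert (Hd2 : 3 * exp H * d < eps).
  { assert (d <= eps / (4 * exp H)) by apply Rmin_r.
    assert (3 * exp H * (eps / (4 * exp H)) = 3 / 4 * eps) by (field; lra). nra. }
  replace (exp (F n t) - exp (f t)) with (exp (f t) * (exp (F n t - f t) - 1))
    by (rewrite Rmult_minus_distr_l, <- exp_plus; f_equal; [f_equal | ]; ring).
  rewrite Rabs_mult, (Rabs_pos_eq (exp _)) by (left; apply exp_pos).
  assert (exp (f t) <= exp H) by (apply exp_le; pose proof (Rle_abs (f t)); lra).
  pose proof (Rabs_exp_sub_1_le (F n t - f t) ltac:(lra)).
  pose proof (Rabs_pos (exp (F n t - f t) - 1)). pose proof (exp_pos (f t)). nra.
Qed.

Lemma unif_cv_on_sum_from_equiv a w C (m : nat -> R -> nat) h K H :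
  equiv_scal a C w -> (forall t, K t -> Rabs (h t) <= H) ->
  unif_cv_on (fun n t => sum_from w n (m n t)) h K ->
  unif_cv_on (fun n t => sum_from a n (m n t)) (fun t => C * h t) K.
Proof.
  intros Haw Hh Hw eps He.
  assert (HH : 0 <= Rabs H) by apply Rabs_pos. assert (HC : 0 <= Rabs C) by apply Rabs_pos.
  set (e1 := eps / (2 * (Rabs H + 1))).
  set (e2 := Rmin 1 (eps / (2 * (Rabs C + 1)))).
  assert (He1 : 0 < e1) by (apply Rdiv_lt_0_compat; lra).
  assert (He2 : 0 < e2) by (apply Rmin_pos; [lra | apply Rdiv_lt_0_compat; lra]).
  destruct (Haw e1 He1) as [N1 HN1]. destruct (Hw e2 He2) as [N2 HN2].
  exists (Nat.max N1 N2). intros n Hn t Ht.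
  specialize (HN2 n ltac:(lia) t Ht). cbv beta in HN2.
  set (Sw := sum_from w n (m n t)) in *.
  assert (Happrox : Rabs (sum_from a n (m n t) - C * Sw) <= e1 * Sw)
    by (apply sum_from_approx; intros i _; apply HN1; lia).
  assert (HSw : Sw <= Rabs H + 1).
  { pose proof (Hh t Ht). pose proof (Rle_abs (h t)). pose proof (Rle_abs H).
    apply Rabs_def2 in HN2. assert (e2 <= 1) by apply Rmin_l. lra. }
  assert (e1 * Sw <= eps / 2).
  { pose proof (Rabs_pos (sum_from a n (m n t) - C * Sw)).
    apply Rle_trans with (e1 * (Rabs H + 1)); [apply Rmult_le_compat_l; lra |].
    right; unfold e1; field; lra. }
  assert (Rabs C * Rabs (Sw - h t) < eps / 2).
  { assert (e2 <= eps / (2 * (Rabs C + 1))) by apply Rmin_r.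
    assert (Rabs C * e2 < eps / 2).
    { apply Rle_lt_trans with ((Rabs C + 1) * e2 - e2); [lra |].
      assert ((Rabs C + 1) * (eps / (2 * (Rabs C + 1))) = eps / 2) by (field; lra). nra. }
    pose proof (Rabs_pos (Sw - h t)). nra. }
  replace (sum_from a n (m n t) - C * h t)
    with ((sum_from a n (m n t) - C * Sw) + C * (Sw - h t)) by ring.
  eapply Rle_lt_trans; [apply Rabs_triang |]. rewrite Rabs_mult. lra.
Qed.

Definition log_factor (alpha : R) (r : nat -> R) (j : nat) : R := - ln (1 - alpha * r j).

Lemma lprod_pos alpha r n : (forall j, 0 < 1 - alpha * r j) -> 0 < lprod alpha r n.
Proof.
  intros Hr. induction n as [|n IH]; simpl; [lra |].
  apply Rmult_lt_0_compat; [exact IH | apply Rinv_0_lt_compat, Hr].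
Qed.

Lemma lprod_add alpha r n m : (forall j, 0 < 1 - alpha * r j) ->
  lprod alpha r (n + m) = lprod alpha r n * exp (sum_from (log_factor alpha r) n m).
Proof.
  intros Hr. induction m as [|m IH]; simpl sum_from.
  - rewrite Nat.add_0_r, exp_0. ring.
  - rewrite Nat.add_succ_r. simpl lprod. rewrite IH, exp_plus.
    unfold log_factor. rewrite exp_Ropp, exp_ln by apply Hr. ring.
Qed.

Lemma kidx_bounds gamma n t : 0 <= t ->
  (n <= kidx gamma n t)%nat /\
  INR (kidx gamma n t) <= INR n + Rpower (INR n) gamma * t /\
  INR n + Rpower (INR n) gamma * t - 1 < INR (kidx gamma n t).
Proof.
  intros Ht. unfold kidx. set (x := INR n + Rpower (INR n) gamma * t).
  assert (Hx : INR n <= x) by (pose proof (Rpower_pos (INR n) gamma); unfold x; nra).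
  destruct (base_Int_part x) as [Hfl1 Hfl2].
  assert (Hz : (0 <= Int_part x)%Z).
  { assert (-1 < Int_part x)%Z by (apply lt_IZR; pose proof (pos_INR n); lra). lia. }
  assert (E : INR (Z.to_nat (Int_part x)) = IZR (Int_part x))
    by (rewrite INR_IZR_INZ, Z2Nat.id; auto).
  rewrite E. repeat split; try lra.
  apply INR_le. rewrite E, INR_IZR_INZ. apply IZR_le, Zlt_succ_le, lt_IZR.
  rewrite succ_IZR, <- INR_IZR_INZ. lra.
Qed.

Lemma lprod_kidx_ratio alpha r gamma n t : (forall j, 0 < 1 - alpha * r j) -> 0 <= t ->
  lprod alpha r (kidx gamma n t) / lprod alpha r n
  = exp (sum_from (log_factor alpha r) n (kidx gamma n t - n)).
Proof.
  intros Hr Ht. destruct (kidx_bounds gamma n t Ht) as [Hk _].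
  replace (kidx gamma n t) with (n + (kidx gamma n t - n))%nat at 1 by lia.
  rewrite lprod_add by exact Hr. pose proof (lprod_pos alpha r n Hr). field. lra.
Qed.

Lemma kidx_sub_bounds gamma n t : 0 <= t ->
  Rpower (INR n) gamma * t - 1 < INR (kidx gamma n t - n) <= Rpower (INR n) gamma * t.
Proof.
  intros Ht. destruct (kidx_bounds gamma n t Ht) as [Hk [Hk1 Hk2]].
  rewrite minus_INR by exact Hk. lra.
Qed.

Lemma log_factor_equiv alpha gamma c r :
  0 <= alpha <= 1 -> 0 < gamma -> 0 <= c -> (forall n, 0 <= r n < 1) ->
  Un_cv (fun n => Rpower (INR n) gamma * r n) c ->
  equiv_scal (log_factor alpha r) (c * alpha) (fun j => Rpower (INR j) (- gamma)).
Proof.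
  intros Ha Hg Hc Hr Hlim eps He.
  set (eta := Rmin (/ (2 * (c + 1))) (eps / (4 * (c + 1) * (c + 1)))).
  assert (Heta : 0 < eta).
  { apply Rmin_pos; [apply Rinv_0_lt_compat; lra | apply Rdiv_lt_0_compat; nra]. }
  destruct (Hlim (Rmin (eps / 2) 1)) as [N1 HN1]; [apply Rmin_pos; lra |].
  destruct (Rpower_opp_eventually_le gamma eta Hg Heta) as [N2 [_ HN2]].
  exists (Nat.max N1 N2). intros j Hj.
  set (w := Rpower (INR j) (- gamma)). set (u := Rpower (INR j) gamma * r j).
  assert (Hw : 0 < w) by apply Rpower_pos.
  assert (Hu : Rabs (u - c) <= eps / 2 /\ u <= c + 1).
  { assert (H1 : Rabs (u - c) < Rmin (eps / 2) 1) by (apply HN1; lia).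
    pose proof (Rmin_l (eps / 2) 1). pose proof (Rmin_r (eps / 2) 1).
    pose proof (Rle_abs (u - c)). lra. }
  assert (Hweta : w <= / (2 * (c + 1)) /\ w <= eps / (4 * (c + 1) * (c + 1))).
  { assert (w <= eta) by (apply HN2; lia). unfold eta in *.
    pose proof (Rmin_l (/ (2 * (c + 1))) (eps / (4 * (c + 1) * (c + 1)))).
    pose proof (Rmin_r (/ (2 * (c + 1))) (eps / (4 * (c + 1) * (c + 1)))). lra. }
  assert (Hru : r j = u * w)
    by (unfold u, w; rewrite Rmult_comm, <- Rmult_assoc, Rpower_opp_mul; ring).
  assert (Hu0 : 0 <= u) by (unfold u; pose proof (Rpower_pos (INR j) gamma); pose proof (Hr j); nra).
  set (x := alpha * r j).
  assert (Hx : 0 <= x <= (c + 1) * w).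
  { unfold x. rewrite Hru. assert (0 <= u * w) by (apply Rmult_le_pos; lra).
    split; [apply Rmult_le_pos; lra |].
    apply Rle_trans with (u * w); [nra | apply Rmult_le_compat_r; lra]. }
  assert (Hcw : (c + 1) * w <= 1 / 2).
  { apply Rle_trans with ((c + 1) * / (2 * (c + 1))); [apply Rmult_le_compat_l; lra |].
    right; field; lra. }
  (* -ln (1 - x) = x + O(x^2) and x = alpha r_j = alpha u_j w_j with u_j -> c *)
  assert (Hquad : 2 * x * x <= eps / 2 * w).
  { apply Rle_trans with (2 * (c + 1) * (c + 1) * w * w); [nra |].
    apply Rle_trans with (2 * (c + 1) * (c + 1) * w * (eps / (4 * (c + 1) * (c + 1))));
      [apply Rmult_le_compat_l; nra | right; field; lra]. }
  assert (Hlin : Rabs (x - c * alpha * w) <= eps / 2 * w).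
  { unfold x. rewrite Hru. replace (alpha * (u * w) - c * alpha * w) with (alpha * w * (u - c)) by ring.
    rewrite Rabs_mult, Rabs_pos_eq by nra.
    apply Rle_trans with (w * Rabs (u - c)).
    - pose proof (Rabs_pos (u - c)). apply Rmult_le_compat_r; nra.
    - rewrite Rmult_comm. apply Rmult_le_compat_r; lra. }
  destruct (neg_ln_1_sub_bounds x ltac:(lra)) as [Hln1 Hln2].
  unfold log_factor. fold x.
  replace (- ln (1 - x) - c * alpha * w) with ((- ln (1 - x) - x) + (x - c * alpha * w)) by ring.
  eapply Rle_trans; [apply Rabs_triang |].
  rewrite (Rabs_pos_eq (- ln (1 - x) - x)) by lra. lra.
Qed.

Lemma sum_Rpower_opp_kidx_le gamma n t : (1 <= n)%nat -> 0 < gamma -> 0 <= t ->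
  sum_from (fun j => Rpower (INR j) (- gamma)) n (kidx gamma n t - n) <= t.
Proof.
  intros Hn Hg Ht.
  assert (HnR : 0 < INR n) by (apply lt_0_INR; lia).
  destruct (kidx_sub_bounds gamma n t Ht) as [_ Hm].
  eapply Rle_trans.
  - apply (sum_from_bounds _ _ _ 0 (Rpower (INR n) (- gamma))).
    intros i _. split; [left; apply Rpower_pos |].
    apply Rpower_le_base_nonpos; [lra | apply le_INR; lia | lra].
  - pose proof (Rpower_opp_mul (INR n) gamma). pose proof (Rpower_pos (INR n) (- gamma)).
    apply Rle_trans with (Rpower (INR n) gamma * t * Rpower (INR n) (- gamma));
      [apply Rmult_le_compat_r; lra | right; nra].
Qed.

Lemma sum_Rpower_opp_kidx_ge gamma n t T : (1 <= n)%nat -> 0 < gamma <= 1 -> 0 <= t <= T ->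
  t - Rpower (INR n) (- gamma) - T * T * Rpower (INR n) (gamma - 1)
  <= sum_from (fun j => Rpower (INR j) (- gamma)) n (kidx gamma n t - n).
Proof.
  intros Hn Hg Ht.
  assert (HnR : 0 < INR n) by (apply lt_0_INR; lia).
  set (P := Rpower (INR n) gamma). set (w := Rpower (INR n) (- gamma)).
  set (z := Rpower (INR n) (gamma - 1)).
  assert (HwP : w * P = 1) by apply Rpower_opp_mul.
  assert (Hw : 0 < w) by apply Rpower_pos. assert (Hz : 0 < z) by apply Rpower_pos.
  assert (HnzP : INR n * z = P).
  { unfold z, P. rewrite <- (Rpower_1 (INR n) HnR) at 1. rewrite <- Rpower_plus. f_equal; ring. }
  (* every index j < k_n(t) is at most n + P T = n (1 + z T) *)
  set (q := Rpower (1 + z * T) (- gamma)).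
  assert (Hq : 1 - gamma * (z * T) <= q <= 1)
    by (apply Rpower_1_add_opp_bounds; [nra | lra]).
  assert (Hwq : Rpower (INR n + P * T) (- gamma) = w * q).
  { replace (INR n + P * T) with (INR n * (1 + z * T)) by (rewrite <- HnzP; ring).
    symmetry; apply Rpower_mult_distr; nra. }
  destruct (kidx_sub_bounds gamma n t (proj1 Ht)) as [Hm Hm'].
  fold P in Hm, Hm'.
  set (m := (kidx gamma n t - n)%nat) in *.
  assert (Hsum : INR m * (w * q) <= sum_from (fun j => Rpower (INR j) (- gamma)) n m).
  { apply (sum_from_bounds _ _ _ (w * q) w). intros i Hi. split.
    - rewrite <- Hwq. apply Rpower_le_base_nonpos; [apply lt_0_INR; lia | | lra].
      apply Rle_trans with (INR n + INR m); [rewrite <- plus_INR; apply le_INR; lia |].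
      assert (P * t <= P * T) by (apply Rmult_le_compat_l; [left; apply Rpower_pos | lra]).
      lra.
    - apply Rpower_le_base_nonpos; [lra | apply le_INR; lia | lra]. }
  assert (Hmw : t - w < INR m * w).
  { apply Rmult_lt_compat_r with (r := w) in Hm; [| exact Hw].
    replace ((P * t - 1) * w) with (w * P * t - w) in Hm by ring. rewrite HwP in Hm. lra. }
  assert (Htq : t * (1 - q) <= T * T * z).
  { apply Rle_trans with (t * (gamma * (z * T))); [apply Rmult_le_compat_l; lra |].
    assert (0 <= z * T) by nra.
    apply Rle_trans with (t * (z * T)); [apply Rmult_le_compat_l; nra |].
    replace (T * T * z) with (T * (z * T)) by ring. apply Rmult_le_compat_r; lra. }
  assert (0 < q) by apply Rpower_pos.
  assert ((t - w) * q <= INR m * w * q) by (apply Rmult_le_compat_r; lra).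
  assert (w * q <= w) by nra.
  rewrite Rmult_assoc in *. lra.
Qed.

Lemma sum_Rpower_opp_kidx_unif_cv gamma T (K : R -> Prop) :
  0 < gamma < 1 -> (forall t, K t -> 0 <= t <= T) ->
  unif_cv_on (fun n t => sum_from (fun j => Rpower (INR j) (- gamma)) n (kidx gamma n t - n))
             (fun t => t) K.
Proof.
  intros Hg HK eps He.
  set (eta := eps / (4 * (T * T + 1))).
  assert (Heta : 0 < eta) by (apply Rdiv_lt_0_compat; nra).
  destruct (Rpower_opp_eventually_le (1 - gamma) eta ltac:(lra) Heta) as [N1 [HN1 Hz]].
  destruct (Rpower_opp_eventually_le gamma (eps / 4) ltac:(lra) ltac:(lra)) as [N2 [_ Hw]].
  exists (Nat.max N1 N2). intros n Hn t Ht. destruct (HK t Ht) as [Ht0 HtT].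
  pose proof (sum_Rpower_opp_kidx_le gamma n t ltac:(lia) ltac:(lra) Ht0).
  pose proof (sum_Rpower_opp_kidx_ge gamma n t T ltac:(lia) ltac:(lra) ltac:(lra)).
  assert (Rpower (INR n) (- gamma) <= eps / 4) by (apply Hw; lia).
  assert (Rpower (INR n) (gamma - 1) <= eta)
    by (replace (gamma - 1) with (- (1 - gamma)) by ring; apply Hz; lia).
  assert (T * T * eta < eps / 2).
  { unfold eta. replace (T * T * (eps / (4 * (T * T + 1)))) with (eps / 4 * (T * T / (T * T + 1)))
      by (field; nra).
    assert (T * T / (T * T + 1) < 1)
      by (apply Rmult_lt_reg_r with (T * T + 1); [nra |]; unfold Rdiv;
          rewrite Rmult_assoc, Rinv_l by nra; lra).
    nra. }
  assert (T * T * Rpower (INR n) (gamma - 1) <= T * T * eta) by (apply Rmult_le_compat_l; nra).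
  apply Rabs_def1; lra.
Qed.

Lemma sum_inv_kidx_unif_cv (K : R -> Prop) : (forall t, K t -> 0 <= t) ->
  unif_cv_on (fun n t => sum_from (fun j => Rpower (INR j) (-1)) n (kidx 1 n t - n))
             (fun t => ln (1 + t)) K.
Proof.
  intros HK eps He.
  destruct (INR_archimed eps 1 He) as [n0 Hn0].
  exists (n0 + 2)%nat. intros n Hn t Ht. specialize (HK t Ht).
  assert (Hn0n : INR n0 + 2 <= INR n)
    by (replace 2 with (INR 2) by (simpl; ring); rewrite <- plus_INR; apply le_INR; lia).
  pose proof (pos_INR n0).
  assert (Hsmall : / (INR n0 + 1) < eps).
  { apply Rmult_lt_reg_r with (INR n0 + 1); [lra |]. rewrite Rinv_l by lra. nra. }
  assert (HP : Rpower (INR n) 1 = INR n) by (apply Rpower_1; lra).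
  destruct (kidx_bounds 1 n t HK) as [Hk [Hk1 Hk2]]. rewrite HP in Hk1, Hk2.
  set (k := kidx 1 n t) in *.
  assert (HkR : INR n <= INR k) by (apply le_INR; exact Hk).
  replace (sum_from (fun j => Rpower (INR j) (-1)) n (k - n))
    with (sum_from (fun j => / INR j) n (k - n)).
  2:{ apply sum_from_ext. intros i _.
      symmetry; apply Rpower_opp_1, lt_0_INR; lia. }
  pose proof (sum_from_inv_ge_ln n (k - n) ltac:(lia)) as Hlo.
  pose proof (sum_from_inv_le_ln n (k - n) ltac:(lia)) as Hhi.
  replace (n + (k - n))%nat with k in Hlo, Hhi by lia.
  assert (ln (1 + t) - ln (INR k) + ln (INR n) < eps).
  { pose proof (ln_sub_le ((1 + t) * INR n) (INR k) ltac:(nra) ltac:(lra)) as Hln.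
    rewrite ln_mult in Hln by lra.
    assert ((1 + t) * INR n / INR k - 1 < / INR k).
    { apply Rmult_lt_reg_r with (INR k); [lra |].
      unfold Rdiv. rewrite Rmult_minus_distr_r, Rmult_assoc, Rinv_l by lra. lra. }
    assert (/ INR k <= / (INR n0 + 1)) by (apply Rinv_le_contravar; lra).
    lra. }
  assert (ln (INR k - 1) - ln (INR n - 1) - ln (1 + t) < eps).
  { pose proof (ln_sub_le (INR k - 1) ((INR n - 1) * (1 + t)) ltac:(lra) ltac:(nra)) as Hln.
    rewrite ln_mult in Hln by lra.
    assert ((INR k - 1) / ((INR n - 1) * (1 + t)) - 1 <= / (INR n - 1)).
    { apply Rmult_le_reg_r with ((INR n - 1) * (1 + t)); [nra |].
      unfold Rdiv. rewrite Rmult_minus_distr_r, Rmult_assoc, Rinv_l by nra.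
      replace (/ (INR n - 1) * ((INR n - 1) * (1 + t))) with (1 + t) by (field; lra). nra. }
    assert (/ (INR n - 1) <= / (INR n0 + 1)) by (apply Rinv_le_contravar; lra).
    lra. }
  apply Rabs_def1; lra.
Qed.

Lemma lprod_kidx_ratio_unif_cv alpha gamma c r (K : R -> Prop) h H :
  0 <= alpha <= 1 -> 0 < gamma -> 0 <= c -> (forall n, 0 <= r n < 1) ->
  Un_cv (fun n => Rpower (INR n) gamma * r n) c ->
  (forall t, K t -> 0 <= t) -> (forall t, K t -> Rabs (h t) <= H) ->
  unif_cv_on (fun n t => sum_from (fun j => Rpower (INR j) (- gamma)) n (kidx gamma n t - n)) h K ->
  unif_cv_on (fun n t => lprod alpha r (kidx gamma n t) / lprod alpha r n)
             (fun t => exp (c * alpha * h t)) K.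
Proof.
  intros Ha Hg Hc Hr Hlim HK Hh Hsum.
  assert (Hr' : forall j, 0 < 1 - alpha * r j) by (intros j; destruct (Hr j); nra).
  apply unif_cv_on_ext
    with (G := fun n t => exp (sum_from (log_factor alpha r) n (kidx gamma n t - n)))
         (g := fun t => exp (c * alpha * h t)); [intros; apply lprod_kidx_ratio; auto | reflexivity |].
  apply unif_cv_on_exp with (H := Rabs (c * alpha) * H).
  - intros t Ht. rewrite Rabs_mult. apply Rmult_le_compat_l; [apply Rabs_pos | auto].
  - apply unif_cv_on_sum_from_equiv with (w := fun j => Rpower (INR j) (- gamma)) (H := H); auto.
    apply log_factor_equiv; auto.
Qed.

Theorem lemma6p1 (alpha gamma c : R) (r : nat -> R)
  (Halpha : 0 < alpha <= 1) (Hgamma : 1/2 < gamma <= 1) (Hc : 0 < c)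
  (Hr : forall n : nat, 0 <= r n < 1)
  (Hlim : Un_cv (fun n : nat => Rpower (INR n) gamma * r n) c) :
  forall K : R -> Prop, (forall t, K t -> 0 <= t) -> compact K ->
    (gamma < 1 ->
       unif_cv_on (fun n t => lprod alpha r (kidx gamma n t) / lprod alpha r n)
                  (fun t => exp (c * alpha * t)) K) /\
    (gamma = 1 -> 2 * c * alpha > 1 ->
       unif_cv_on (fun n t => lprod alpha r (kidx gamma n t) / lprod alpha r n)
                  (fun t => Rpower (1 + t) (c * alpha)) K).
Proof.
  intros K HK Hcomp. destruct (compact_P1 K Hcomp) as [m [M HM]].
  assert (HKM : forall t, K t -> 0 <= t <= M) by (intros t Ht; split; [apply HK | apply HM]; exact Ht).
  split.
  - intros Hlt. apply (lprod_kidx_ratio_unif_cv _ _ _ _ _ (fun t => t) M); auto; try lra.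
    + intros t Ht. destruct (HKM t Ht). rewrite Rabs_pos_eq; lra.
    + apply sum_Rpower_opp_kidx_unif_cv with M; auto. lra.
  - intros -> _. apply (lprod_kidx_ratio_unif_cv _ _ _ _ _ (fun t => ln (1 + t)) M); auto; try lra.
    + intros t Ht. destruct (HKM t Ht).
      pose proof (ln_ge_0 (1 + t) ltac:(lra)). pose proof (ln_le_sub_1 (1 + t) ltac:(lra)).
      rewrite Rabs_pos_eq; lra.
    + apply sum_inv_kidx_unif_cv; auto.
Qed.
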